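(* Let $d\ge3$ and let $\mathscr P_d(y,a^\dagger)$ be the space of polynomials in commuting variables $y^\mu,a^{\dagger\mu}$, $\mu=1,\dots,d$. Let $T=\eta^{\mu\nu}\frac{\partial}{\partial a^{\dagger\mu}}\frac{\partial}{\partial a^{\dagger\nu}}$, $\Box=\eta^{\mu\nu}\frac{\partial}{\partial y^\mu}\frac{\partial}{\partial y^\nu}$, $S=\eta^{\mu\nu}\frac{\partial}{\partial a^{\dagger\mu}}\frac{\partial}{\partial y^\nu}$, and let $\mathscr N=\ker T\cap\ker\Box\subset\mathscr P_d(y,a^\dagger)$. Then $S$ maps $\mathscr N$ onto $\mathscr N$, i.e. $S(\mathscr N)=\mathscr N$.
   Context: $\eta^{\mu\nu}$ is a nondegenerate constant symmetric (Minkowski) metric on $\mathbb R^d$. The operators $T,\Box,S$ pairwise commute, so $S$ preserves $\mathscr N$. *)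

From HB Require Import structures.
From mathcomp Require Import all_boot all_order all_algebra.
From mathcomp Require Import mpoly.
Set Implicit Arguments. Unset Strict Implicit. Unset Printing Implicit Defensive.
Import Order.TTheory GRing.Theory Num.Theory.
Local Open Scope ring_scope.

(* P_d(y, a^dagger): polynomials in the 2d commuting variables
   y^mu = 'X_(lshift d mu) and a^dagger^mu = 'X_(rshift d mu), mu < d. *)
Definition Pd (R : realFieldType) (d : nat) := {mpoly R[d + d]}.

Definition yv (d : nat) (mu : 'I_d) : 'I_(d + d) := lshift d mu.
Definition av (d : nat) (mu : 'I_d) : 'I_(d + d) := rshift d mu.

Definition opT (R : realFieldType) (d : nat) (eta : 'M[R]_d) (p : Pd R d) : Pd R d :=
  \sum_(mu < d) \sum_(nu < d) eta mu nu *: mderiv (av mu) (mderiv (av nu) p).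

Definition opBox (R : realFieldType) (d : nat) (eta : 'M[R]_d) (p : Pd R d) : Pd R d :=
  \sum_(mu < d) \sum_(nu < d) eta mu nu *: mderiv (yv mu) (mderiv (yv nu) p).

Definition opS (R : realFieldType) (d : nat) (eta : 'M[R]_d) (p : Pd R d) : Pd R d :=
  \sum_(mu < d) \sum_(nu < d) eta mu nu *: mderiv (av mu) (mderiv (yv nu) p).

Definition inN (R : realFieldType) (d : nat) (eta : 'M[R]_d) (p : Pd R d) : Prop :=
  opT eta p = 0 /\ opBox eta p = 0.

Definition minkowski (R : realFieldType) (d : nat) : 'M[R]_d :=
  \matrix_(i < d, j < d) (if i == j then (if val i == 0%N then -1 else 1) else 0).

From HB Require Import structures.
From mathcomp Require Import all_boot all_order all_algebra.
From mathcomp Require Import mpoly.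
From mathcomp Require Import zify.
Set Implicit Arguments. Unset Strict Implicit. Unset Printing Implicit Defensive.
Import Order.TTheory GRing.Theory Num.Theory.
Local Open Scope ring_scope.

(* Split the variables into the time coordinates [y^0], [a^0] and the spatial
   ones.  Since [Box] and [T] are wave operators in [y^0] and [a^0], an element
   of [N] is determined by its Cauchy data, i.e. its coefficients of degree at
   most one in each of [y^0] and [a^0], and any finitely supported Cauchy data
   extend to an element of [N].  On Cauchy data [S] is triangular for a suitable
   ranking of monomials: for every Cauchy monomial [x] some [p] in [N] has
   [S p] with non-zero datum at [x] and vanishing data of rank at least that of
   [x] elsewhere, and induction on the rank puts all of [N] into [S(N)].  That
   [S] preserves [N] is because constant-coefficient operators commute. *)

Lemma addr_neq0 (V : nmodType) (x y : V) : x + y != 0 -> x != 0 \/ y != 0.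
Proof. by have [->|] := eqVneq x 0; [rewrite add0r; right | left]. Qed.

Lemma sumr_neq0 (V : nmodType) (I : finType) (F : I -> V) :
  \sum_x F x != 0 -> exists x, F x != 0.
Proof.
case: (pickP (fun x => F x != 0)) => [x Fx _|F0]; first by exists x.
by rewrite big1 ?eqxx // => x _; apply/eqP/negbFE/F0.
Qed.

Section Monomials.
Variable n : nat.
Implicit Types m : 'X_{1..n}.

Lemma mnm_subUK m (i : 'I_n) : (0 < m i)%N -> (m - U_(i) + U_(i))%MM = m.
Proof.
move=> gt0; apply/mnmP => j; rewrite mnmDE mnmBE mnm1E.
by case: (i =P j) => [<-|_] /=; lia.
Qed.

Lemma mnm_subUUK m (i : 'I_n) : (1 < m i)%N -> (m - U_(i) - U_(i) + U_(i) + U_(i))%MM = m.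
Proof.
move=> gt1; rewrite (mnm_subUK (m := (m - U_(i))%MM)) ?mnm_subUK //; first lia.
by rewrite mnmBE mnm1E eqxx; lia.
Qed.

Lemma mdegUU m (i j : 'I_n) : mdeg (m + U_(i) + U_(j))%MM = (mdeg m).+2.
Proof. by rewrite !mdegD !mdeg1 !addn1. Qed.

Lemma mdeg_swapUU m (i j : 'I_n) : (1 < m i)%N ->
  mdeg (m - U_(i) - U_(i) + U_(j) + U_(j))%MM = mdeg m.
Proof. by move=> lt1; rewrite mdegUU -{2}(mnm_subUUK lt1) mdegUU. Qed.

End Monomials.

Section SecondOrderOperators.
Variables (R : comNzRingType) (n d : nat).
Implicit Types (c : 'M[R]_d) (u v : 'I_d -> 'I_n) (p q : {mpoly R[n]}).

Definition mdiff2 c u v p : {mpoly R[n]} :=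
  \sum_(mu < d) \sum_(nu < d) c mu nu *: mderiv (u mu) (mderiv (v nu) p).

Lemma mdiff2_sum c u v (I : Type) (r : seq I) (P : pred I) (F : I -> {mpoly R[n]}) :
  mdiff2 c u v (\sum_(i <- r | P i) F i) = \sum_(i <- r | P i) mdiff2 c u v (F i).
Proof.
rewrite /mdiff2 [RHS]exchange_big; apply: eq_bigr => mu _.
rewrite [RHS]exchange_big; apply: eq_bigr => nu _.
by rewrite (raddf_sum (mderiv (v nu))) (raddf_sum (mderiv (u mu))) scaler_sumr.
Qed.

Lemma mdiff2D c u v p q : mdiff2 c u v (p + q) = mdiff2 c u v p + mdiff2 c u v q.
Proof.
by have := mdiff2_sum c u v [:: p; q] xpredT id; rewrite !big_cons !big_nil !addr0.
Qed.

Lemma mdiff20 c u v : mdiff2 c u v 0 = 0.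
Proof. by have := mdiff2_sum c u v [::] xpredT id; rewrite !big_nil. Qed.

Lemma mdiff2Z c u v a p : mdiff2 c u v (a *: p) = a *: mdiff2 c u v p.
Proof.
rewrite /mdiff2 scaler_sumr; apply: eq_bigr => mu _.
rewrite scaler_sumr; apply: eq_bigr => nu _.
by rewrite !mderivZ !scalerA mulrC.
Qed.

Lemma mdiff2_mderiv c u v i p :
  mdiff2 c u v (mderiv i p) = mderiv i (mdiff2 c u v p).
Proof.
rewrite /mdiff2 (raddf_sum (mderiv i)); apply: eq_bigr => mu _.
rewrite (raddf_sum (mderiv i)); apply: eq_bigr => nu _.
by rewrite /= mderivZ (mderiv_comm (u mu) i) (mderiv_comm (v nu) i).
Qed.

Lemma mdiff2C c u v c' u' v' p :
  mdiff2 c u v (mdiff2 c' u' v' p) = mdiff2 c' u' v' (mdiff2 c u v p).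
Proof.
rewrite {2}/mdiff2 {2}/mdiff2 mdiff2_sum; apply: eq_bigr => mu _.
rewrite mdiff2_sum; apply: eq_bigr => nu _.
by rewrite mdiff2Z !mdiff2_mderiv.
Qed.

End SecondOrderOperators.

Section MinkowskiCoefficients.
Variables (R : realFieldType) (n : nat).
Implicit Types (p : {mpoly R[n]}) (m : 'X_{1..n}).

Definition dfac m (i j : 'I_n) : R := (((m + U_(i))%MM j).+1 * (m i).+1)%:R.

Lemma dfac_neq0 m (i j : 'I_n) : dfac m i j != 0.
Proof. by rewrite /dfac pnatr_eq0 muln_eq0. Qed.

Lemma mcoeff_mderiv2 (i j : 'I_n) p m :
  (mderiv i (mderiv j p))@_m = p@_(m + U_(i) + U_(j)) * dfac m i j.
Proof. by rewrite !mcoeff_mderiv /dfac natrM mulrA !mulr_natr. Qed.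

Lemma mcoeff_mdiff2_minkowski d (u v : 'I_d.+1 -> 'I_n) p m :
  (mdiff2 (minkowski R d.+1) u v p)@_m =
    - (p@_(m + U_(u ord0) + U_(v ord0)) * dfac m (u ord0) (v ord0))
    + \sum_(i < d) p@_(m + U_(u (lift ord0 i)) + U_(v (lift ord0 i)))
                   * dfac m (u (lift ord0 i)) (v (lift ord0 i)).
Proof.
have diag mu :
    (\sum_(nu < d.+1) minkowski R d.+1 mu nu *: mderiv (u mu) (mderiv (v nu) p))@_m
    = (if val mu == 0%N then -1 else 1) * (mderiv (u mu) (mderiv (v mu) p))@_m.
  rewrite raddf_sum (bigD1 mu) //= big1 ?addr0 => [|nu /negbTE nmu].
    by rewrite mcoeffZ mxE eqxx.
  by rewrite mcoeffZ mxE eq_sym nmu mul0r.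
rewrite /mdiff2 raddf_sum big_ord_recl /= diag /= mcoeff_mderiv2 mulN1r; congr (_ + _).
by apply: eq_bigr => i _; rewrite diag /= mul1r mcoeff_mderiv2.
Qed.

Lemma minkowski_mdiff2_eq0 d (u v : 'I_d.+1 -> 'I_n) p :
  mdiff2 (minkowski R d.+1) u v p = 0 -> forall m,
  p@_(m + U_(u ord0) + U_(v ord0)) * dfac m (u ord0) (v ord0)
  = \sum_(i < d) p@_(m + U_(u (lift ord0 i)) + U_(v (lift ord0 i)))
                 * dfac m (u (lift ord0 i)) (v (lift ord0 i)).
Proof.
move=> /mpolyP eq0 m; move: (eq0 m); rewrite mcoeff0 mcoeff_mdiff2_minkowski.
by move/eqP; rewrite addrC subr_eq0 => /eqP.
Qed.

End MinkowskiCoefficients.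

Arguments dfac {R n} m i j.

Section WaveEquation.
Variables (R : realFieldType) (n d : nat) (w : 'I_d.+1 -> 'I_n).
Hypothesis w_inj : injective w.
Implicit Types (p : {mpoly R[n]}) (m : 'X_{1..n}).
Local Notation w0 := (w ord0).
Local Notation ws i := (w (lift ord0 i)).
Local Notation wave p := (mdiff2 (minkowski R d.+1) w w p).

Lemma wave_supp p m : wave p = 0 -> p@_(m + U_(w0) + U_(w0)) != 0 ->
  exists i, p@_(m + U_(ws i) + U_(ws i)) != 0.
Proof.
move=> /minkowski_mdiff2_eq0/(_ m) eqm nz.
have /sumr_neq0[i] : \sum_i p@_(m + U_(ws i) + U_(ws i)) * dfac m (ws i) (ws i) != 0.
  by rewrite -eqm mulf_neq0 ?dfac_neq0.
by rewrite mulf_eq0 negb_or => /andP[nzi _]; exists i.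
Qed.

Lemma wave_single p m i0 : wave p = 0 ->
  (forall i, i != i0 -> p@_(m + U_(ws i) + U_(ws i)) = 0) ->
  p@_(m + U_(ws i0) + U_(ws i0)) != 0 -> p@_(m + U_(w0) + U_(w0)) != 0.
Proof.
move=> /minkowski_mdiff2_eq0/(_ m) eqm eq0 nz; apply: contra_neq nz => eq0'.
move: eqm; rewrite eq0' mul0r (bigD1 i0) //= big1 => [|i /eq0 ->]; last by rewrite mul0r.
by rewrite addr0 => /esym/eqP; rewrite mulf_eq0 (negbTE (@dfac_neq0 _ _ _ _ _)) orbF => /eqP.
Qed.

(* The value of the coefficient at [m] forced by the wave equation. *)
Definition wave_reduce (F : 'X_{1..n} -> R) m : R :=
  let m' := (m - U_(w0) - U_(w0))%MM in
  (\sum_(i < d) F (m' + U_(ws i) + U_(ws i))%MM * dfac m' (ws i) (ws i))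
    / dfac m' w0 w0.

Lemma wave_reduceE F m : wave_reduce F (m + U_(w0) + U_(w0))%MM * dfac m w0 w0 =
  \sum_(i < d) F (m + U_(ws i) + U_(ws i))%MM * dfac m (ws i) (ws i).
Proof. by rewrite /wave_reduce !addmK mulfVK ?dfac_neq0. Qed.

Lemma wave_coef_eq0 p (Q : pred 'X_{1..n}) : wave p = 0 ->
  (forall m i, Q (m + U_(w0) + U_(w0))%MM -> Q (m + U_(ws i) + U_(ws i))%MM) ->
  (forall m, Q m -> (m w0 <= 1)%N -> p@_m = 0) ->
  forall m, Q m -> p@_m = 0.
Proof.
move=> wp Qstep eq0 m; move: {2}(m w0) (leqnn (m w0)) => t.
elim: t m => [|t IH] m le_t Qm; first by apply: eq0; lia.
have [|lt1] := leqP (m w0) 1; first exact: eq0.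
have [//|nz] := eqVneq p@_m 0; exfalso.
rewrite -(mnm_subUUK lt1) in Qm nz; have [i /eqP] := wave_supp wp nz; apply.
apply: IH; last exact: Qstep.
have ws0 : (ws i == w0) = false by rewrite (inj_eq w_inj) lift_eqF.
by rewrite !mnmDE !mnmBE !mnm1E eqxx ws0; lia.
Qed.

End WaveEquation.

Section KernelN.
Variables (R : realFieldType) (d : nat) (eta : 'M[R]_d).
Implicit Types p q : Pd R d.

Lemma opTE p : opT eta p = mdiff2 eta (@av d) (@av d) p. Proof. by []. Qed.
Lemma opBoxE p : opBox eta p = mdiff2 eta (@yv d) (@yv d) p. Proof. by []. Qed.
Lemma opSE p : opS eta p = mdiff2 eta (@av d) (@yv d) p. Proof. by []. Qed.

Lemma inN_opS p : inN eta p -> inN eta (opS eta p).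
Proof.
case=> Tp Bp.
by split; rewrite ?opTE ?opBoxE opSE mdiff2C -?opTE -?opBoxE ?Tp ?Bp mdiff20.
Qed.

Lemma inN0 : inN eta 0.
Proof. by split; rewrite ?opTE ?opBoxE mdiff20. Qed.

Lemma inND p q : inN eta p -> inN eta q -> inN eta (p + q).
Proof.
case=> Tp Bp [Tq Bq].
by split; rewrite ?opTE ?opBoxE mdiff2D -?opTE -?opBoxE ?Tp ?Tq ?Bp ?Bq addr0.
Qed.

Lemma inNZ a p : inN eta p -> inN eta (a *: p).
Proof.
by case=> Tp Bp; split; rewrite ?opTE ?opBoxE mdiff2Z -?opTE -?opBoxE ?Tp ?Bp scaler0.
Qed.

End KernelN.

Section VariableIndices.
Variable d : nat.
Implicit Types i j : 'I_d.

Lemma yv_inj : injective (@yv d). Proof. exact: lshift_inj. Qed.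
Lemma av_inj : injective (@av d). Proof. exact: rshift_inj. Qed.

Lemma eq_yv i j : (yv i == yv j) = (i == j). Proof. exact: (inj_eq yv_inj). Qed.
Lemma eq_av i j : (av i == av j) = (i == j). Proof. exact: (inj_eq av_inj). Qed.

Lemma eq_yv_av i j : (yv i == av j) = false.
Proof. by apply/negbTE; rewrite eqE /= neq_ltn (leq_trans (ltn_ord i)) ?leq_addr. Qed.

Lemma eq_av_yv i j : (av i == yv j) = false.
Proof. by rewrite eq_sym eq_yv_av. Qed.

End VariableIndices.

Lemma eq_lift0 q (i j : 'I_q) : (lift ord0 i == lift ord0 j :> 'I_q.+1) = (i == j).
Proof. exact: (inj_eq (@lift_inj _ ord0)). Qed.

Definition eq_varE :=
  (eq_yv, eq_av, eq_yv_av, eq_av_yv, eq_liftF, lift_eqF, eq_lift0, eqxx).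

Ltac mnm_simpl := rewrite ?mnmDE ?mnmBE ?mnm1E ?eq_varE /=.
Ltac mnm_lia := apply/mnmP => ?; rewrite !mnmDE; lia.

Section CauchyProblem.
Variables (R : realFieldType) (k : nat).
Local Notation d := k.+1.
Local Notation n := (d + d)%N.
Local Notation mon := 'X_{1..n}.
Local Notation eta := (minkowski R d).
Local Notation Y0 := (@yv d ord0).
Local Notation A0 := (@av d ord0).
Local Notation Ys i := (@yv d (lift ord0 i)).
Local Notation As i := (@av d (lift ord0 i)).
Implicit Types (p h : Pd R d) (m b : mon).

Definition cauchy m := (m Y0 <= 1)%N && (m A0 <= 1)%N.
Definition spatial m := (m Y0 == 0%N) && (m A0 == 0%N).

Lemma cauchy_eq0 h : inN eta h -> (forall m, cauchy m -> h@_m = 0) -> h = 0.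
Proof.
case=> Th Bh h0; apply/mpolyP => m; rewrite mcoeff0.
apply: (wave_coef_eq0 (@yv_inj d) (Q := xpredT) Bh) => // {}m _ mY.
apply: (wave_coef_eq0 (@av_inj d) (Q := fun m : mon => m Y0 <= 1)%N Th) mY.
  by move=> {}m i; mnm_simpl; rewrite !addn0.
by move=> {}m mY' mA; apply: h0; rewrite /cauchy mY' mA.
Qed.

(* Coefficients off the Cauchy data are determined by the wave equation of
   [opBox] in [Y0] when possible, and otherwise by that of [opT] in [A0]; the
   fuel [m Y0 + m A0] drops by two at each step. *)
Fixpoint cauchy_ext_rec (g : mon -> R) (fuel : nat) m : R :=
  if fuel is f.+2 then
    if (1 < m Y0)%N then wave_reduce (@yv d) (cauchy_ext_rec g f) m
    else if (1 < m A0)%N then wave_reduce (@av d) (cauchy_ext_rec g f) m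
    else g m
  else g m.

Definition cauchy_ext g m := cauchy_ext_rec g (m Y0 + m A0) m.

Lemma cauchy_ext_cauchy g m : cauchy m -> cauchy_ext g m = g m.
Proof.
case/andP=> mY mA; rewrite /cauchy_ext.
by case: (m Y0 + m A0)%N => [|[|f]] //=; rewrite ltnNge mY /= ltnNge mA.
Qed.

Lemma cauchy_ext_box g m : cauchy_ext g (m + U_(Y0) + U_(Y0))%MM * dfac m Y0 Y0
  = \sum_(i < k) cauchy_ext g (m + U_(Ys i) + U_(Ys i))%MM * dfac m (Ys i) (Ys i).
Proof.
rewrite /cauchy_ext; mnm_simpl; rewrite !addn0.
have -> : (m Y0 + 1 + 1 + m A0 = (m Y0 + m A0).+2)%N by lia.
rewrite /= ifT; last by mnm_simpl; lia.
by rewrite wave_reduceE; apply: eq_bigr => i _; mnm_simpl; rewrite !addn0.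
Qed.

Lemma cauchy_ext_T g m : (m Y0 <= 1)%N ->
  cauchy_ext g (m + U_(A0) + U_(A0))%MM * dfac m A0 A0
  = \sum_(i < k) cauchy_ext g (m + U_(As i) + U_(As i))%MM * dfac m (As i) (As i).
Proof.
move=> mY; rewrite /cauchy_ext; mnm_simpl; rewrite !addn0.
have -> : (m Y0 + (m A0 + 1 + 1) = (m Y0 + m A0).+2)%N by lia.
rewrite /= ifF ?ifT; first last.
- by mnm_simpl; rewrite !addn0 ltnNge mY.
- by mnm_simpl; lia.
by rewrite wave_reduceE; apply: eq_bigr => i _; mnm_simpl; rewrite !addn0.
Qed.

Lemma cauchy_ext_rec_eq0 g K : (forall m, (K <= mdeg m)%N -> g m = 0) ->
  forall f m, (K <= mdeg m)%N -> cauchy_ext_rec g f m = 0.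
Proof.
move=> g0; elim/ltn_ind => [[|[|f]]] IH m Km //=; try exact: g0.
have reduce0 w (w_inj : injective w) : (1 < m (w ord0))%N ->
    wave_reduce w (cauchy_ext_rec g f) m = 0.
  move=> lt1; rewrite /wave_reduce big1 ?mul0r // => i _.
  by rewrite IH ?mul0r // mdeg_swapUU.
case: ifP => [/(reduce0 _ _ (@yv_inj d))//|_].
by case: ifP => [/(reduce0 _ _ (@av_inj d))//|_]; apply: g0.
Qed.

Definition cauchy_poly g K : Pd R d :=
  \sum_(m : 'X_{1..n < K}) cauchy_ext g m *: 'X_[m].

Lemma mcoeff_cauchy_poly g K : (forall m, (K <= mdeg m)%N -> g m = 0) ->
  forall m, (cauchy_poly g K)@_m = cauchy_ext g m.
Proof.
move=> g0 m; have [ltK|leK] := ltnP (mdeg m) K; first exact: mcoeff_mpoly.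
rewrite /cauchy_ext (cauchy_ext_rec_eq0 g0) // raddf_sum big1 // => -[m' lt_m'] _ /=.
rewrite mcoeffZ mcoeffX; have [eqm|] := eqVneq m' m; last by rewrite mulr0.
by move: lt_m'; rewrite eqm ltnNge leK.
Qed.

Lemma cauchy_extension g K : (forall m, (K <= mdeg m)%N -> g m = 0) ->
  exists p, inN eta p /\ forall m, cauchy m -> p@_m = g m.
Proof.
move=> g0; exists (cauchy_poly g K).
have Bp : opBox eta (cauchy_poly g K) = 0.
  apply/mpolyP => m.
  rewrite mcoeff0 opBoxE mcoeff_mdiff2_minkowski !mcoeff_cauchy_poly //.
  under eq_bigr => i _ do rewrite mcoeff_cauchy_poly //.
  by rewrite -cauchy_ext_box addNr.
split; last by move=> m cm; rewrite mcoeff_cauchy_poly // cauchy_ext_cauchy.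
split=> //; apply/mpolyP => m; rewrite mcoeff0.
have BTp : opBox eta (opT eta (cauchy_poly g K)) = 0.
  by rewrite opBoxE opTE mdiff2C -opBoxE Bp mdiff20.
apply: (wave_coef_eq0 (@yv_inj d) (Q := xpredT) BTp) => // {}m _ mY.
rewrite opTE mcoeff_mdiff2_minkowski !mcoeff_cauchy_poly //.
under eq_bigr => i _ do rewrite mcoeff_cauchy_poly //.
by rewrite -cauchy_ext_T // addNr.
Qed.

Lemma cauchy_point x :
  exists p, inN eta p /\ forall m, cauchy m -> p@_m = (m == x)%:R.
Proof.
apply: (cauchy_extension (K := (mdeg x).+1)) => m.
by have [->|] := eqVneq m x; rewrite ?ltnn.
Qed.

Lemma mcoeff_opS p m : (opS eta p)@_m =
  - (p@_(m + U_(A0) + U_(Y0)) * dfac m A0 Y0)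
  + \sum_(i < k) p@_(m + U_(As i) + U_(Ys i)) * dfac m (As i) (Ys i).
Proof. exact: mcoeff_mdiff2_minkowski. Qed.

Lemma opS_supp p m : (opS eta p)@_m != 0 ->
  p@_(m + U_(A0) + U_(Y0)) != 0 \/ exists i, p@_(m + U_(As i) + U_(Ys i)) != 0.
Proof.
rewrite mcoeff_opS => /addr_neq0[|/sumr_neq0[i]];
  rewrite ?oppr_eq0 mulf_eq0 negb_or => /andP[nz _]; [left | right; exists i] => //.
Qed.

Lemma opS_single p m : (forall i, p@_(m + U_(As i) + U_(Ys i)) = 0) ->
  p@_(m + U_(A0) + U_(Y0)) != 0 -> (opS eta p)@_m != 0.
Proof.
move=> eq0 nz; rewrite mcoeff_opS big1 => [|i _]; last by rewrite eq0 mul0r.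
by rewrite addr0 oppr_eq0 mulf_neq0 ?dfac_neq0.
Qed.

(* On [N], the Cauchy data of [opS p] at [m + Y0], [m + A0] and [m + Y0 + A0]
   only involve Cauchy data of [p], thanks to the wave equations. *)
Section OpSCauchyData.
Variable p : Pd R d.
Hypothesis Np : inN eta p.

Lemma opS_supp_Y0 m : (opS eta p)@_(m + U_(Y0))%MM != 0 ->
  (exists i, p@_(m + U_(A0) + U_(Ys i) + U_(Ys i)) != 0) \/
  (exists i, p@_(m + U_(Y0) + U_(As i) + U_(Ys i)) != 0).
Proof.
case/opS_supp => [|]; last by right.
rewrite (_ : m + _ + _ + _ = m + U_(A0) + U_(Y0) + U_(Y0))%MM; last by mnm_lia.
by move/(wave_supp Np.2); left.
Qed.

Lemma opS_supp_A0 m : (opS eta p)@_(m + U_(A0))%MM != 0 ->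
  (exists i, p@_(m + U_(Y0) + U_(As i) + U_(As i)) != 0) \/
  (exists i, p@_(m + U_(A0) + U_(As i) + U_(Ys i)) != 0).
Proof.
case/opS_supp => [|]; last by right.
rewrite (_ : m + _ + _ + _ = m + U_(Y0) + U_(A0) + U_(A0))%MM; last by mnm_lia.
by move/(wave_supp Np.1); left.
Qed.

Lemma opS_supp_Y0A0 m : (opS eta p)@_(m + U_(Y0) + U_(A0))%MM != 0 ->
  (exists i j, p@_(m + U_(Ys i) + U_(Ys i) + U_(As j) + U_(As j)) != 0) \/
  (exists i, p@_(m + U_(Y0) + U_(A0) + U_(As i) + U_(Ys i)) != 0).
Proof.
case/opS_supp => [|]; last by right.
rewrite (_ : m + _ + _ + _ + _ = m + U_(A0) + U_(A0) + U_(Y0) + U_(Y0))%MM;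
  last by mnm_lia.
case/(wave_supp Np.2) => i.
rewrite (_ : m + _ + _ + _ + _ = m + U_(Ys i) + U_(Ys i) + U_(A0) + U_(A0))%MM;
  last by mnm_lia.
by case/(wave_supp Np.1) => j nz; left; exists i, j.
Qed.

Lemma opS_single_Y0 m i0 : (forall i, p@_(m + U_(Y0) + U_(As i) + U_(Ys i)) = 0) ->
  (forall i, i != i0 -> p@_(m + U_(A0) + U_(Ys i) + U_(Ys i)) = 0) ->
  p@_(m + U_(A0) + U_(Ys i0) + U_(Ys i0)) != 0 -> (opS eta p)@_(m + U_(Y0))%MM != 0.
Proof.
move=> eq0 eq0' nz; apply: opS_single => //.
rewrite (_ : m + _ + _ + _ = m + U_(A0) + U_(Y0) + U_(Y0))%MM; last by mnm_lia.
exact: (wave_single Np.2 eq0').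
Qed.

Lemma opS_single_A0 m i0 : (forall i, p@_(m + U_(A0) + U_(As i) + U_(Ys i)) = 0) ->
  (forall i, i != i0 -> p@_(m + U_(Y0) + U_(As i) + U_(As i)) = 0) ->
  p@_(m + U_(Y0) + U_(As i0) + U_(As i0)) != 0 -> (opS eta p)@_(m + U_(A0))%MM != 0.
Proof.
move=> eq0 eq0' nz; apply: opS_single => //.
rewrite (_ : m + _ + _ + _ = m + U_(Y0) + U_(A0) + U_(A0))%MM; last by mnm_lia.
exact: (wave_single Np.1 eq0').
Qed.

Lemma opS_single_Y0A0 m i0 j0 :
  (forall i, p@_(m + U_(Y0) + U_(A0) + U_(As i) + U_(Ys i)) = 0) ->
  (forall i j, (i != i0) || (j != j0) ->
     p@_(m + U_(Ys i) + U_(Ys i) + U_(As j) + U_(As j)) = 0) ->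
  p@_(m + U_(Ys i0) + U_(Ys i0) + U_(As j0) + U_(As j0)) != 0 ->
  (opS eta p)@_(m + U_(Y0) + U_(A0))%MM != 0.
Proof.
move=> eq0 eq0' nz; apply: opS_single => //.
have swapYA i : (m + U_(A0) + U_(A0) + U_(Ys i) + U_(Ys i)
               = m + U_(Ys i) + U_(Ys i) + U_(A0) + U_(A0))%MM by mnm_lia.
rewrite (_ : m + _ + _ + _ + _ = m + U_(A0) + U_(A0) + U_(Y0) + U_(Y0))%MM;
  last by mnm_lia.
apply: (wave_single Np.2 (i0 := i0)) => [i ni|].
  rewrite swapYA; apply/eqP; apply: contraT => /(wave_supp Np.1)[j].
  by rewrite eq0' ?ni ?eqxx.
rewrite swapYA; apply: (wave_single Np.1 (i0 := j0)) nz => j nj.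
by rewrite eq0' // nj orbT.
Qed.

End OpSCauchyData.

Lemma cauchy_cases m : cauchy m -> exists2 b, spatial b &
  [\/ m = b, m = (b + U_(Y0))%MM, m = (b + U_(A0))%MM | m = (b + U_(Y0) + U_(A0))%MM].
Proof.
case/andP=> mY mA; exists (m - U_(Y0) - U_(A0))%MM.
  by rewrite /spatial; mnm_simpl; lia.
have [eY|eY] : m Y0 = 0%N \/ m Y0 = 1%N by lia.
all: have [eA|eA] : m A0 = 0%N \/ m A0 = 1%N by lia.
all: [> constructor 1 | constructor 3 | constructor 2 | constructor 4].
all: apply/mnmP => j; rewrite ?mnmDE !mnmBE !mnm1E.
all: case: eqP => [<-|_]; rewrite ?eq_varE /=; try lia.
all: case: eqP => [<-|_]; rewrite ?eq_varE /=; lia.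
Qed.

End CauchyProblem.

Section Surjectivity.
Variables (R : realFieldType) (k : nat).
Local Notation d := k.+3.
Local Notation n := (d + d)%N.
Local Notation mon := 'X_{1..n}.
Local Notation eta := (minkowski R d).
Local Notation Y0 := (@yv d ord0).
Local Notation A0 := (@av d ord0).
Local Notation Ys i := (@yv d (lift ord0 i)).
Local Notation As i := (@av d (lift ord0 i)).
Local Notation j1 := (ord0 : 'I_k.+2).
Local Notation j2 := (lift ord0 (ord0 : 'I_k.+1) : 'I_k.+2).
Implicit Types (p h : Pd R d) (m b x : mon).

(* [opS] is triangular on Cauchy data for [rank]: spatial monomials outrank all
   monomials of at most their degree, and among monomials of the same shape the
   exponents of [y^1] and [a^2] break ties; this needs two spatial directions,
   whence [d >= 3]. *)
Definition tiebreak m := (m (Ys j1) + m (As j2))%N.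
Definition rank m := (mdeg m - tiebreak m + (if spatial m then (mdeg m).+1 else 0))%N.

Lemma tiebreak_le m : (tiebreak m <= mdeg m)%N.
Proof. by rewrite /tiebreak mdegE (bigD1 (Ys j1)) //= (bigD1 (As j2)) //=; lia. Qed.

Lemma rank_spatial b : spatial b -> rank b = (mdeg b - tiebreak b + (mdeg b).+1)%N.
Proof. by rewrite /rank => ->. Qed.

Lemma rank_Y0 b : spatial b -> rank (b + U_(Y0))%MM = ((mdeg b).+1 - tiebreak b)%N.
Proof.
case/andP=> /eqP bY /eqP bA.
by rewrite /rank /spatial /tiebreak mdegD mdeg1; mnm_simpl; rewrite bY bA !addn0 addn1.
Qed.

Lemma rank_A0 b : spatial b -> rank (b + U_(A0))%MM = ((mdeg b).+1 - tiebreak b)%N.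
Proof.
case/andP=> /eqP bY /eqP bA.
by rewrite /rank /spatial /tiebreak mdegD mdeg1; mnm_simpl; rewrite bY bA !addn0 addn1.
Qed.

Lemma rank_Y0A0 b : spatial b ->
  rank (b + U_(Y0) + U_(A0))%MM = ((mdeg b).+2 - tiebreak b)%N.
Proof.
case/andP=> /eqP bY /eqP bA.
by rewrite /rank /spatial /tiebreak mdegUU; mnm_simpl; rewrite bY bA !addn0.
Qed.

Definition S_leading x p := [/\ inN eta p, (opS eta p)@_x != 0 &
  forall m, cauchy m -> m != x -> (rank x <= rank m)%N -> (opS eta p)@_m = 0].

Lemma natr_eqb_neq0 m x : ((m == x)%:R : R) != 0 -> m = x.
Proof. by have [] := eqVneq m x; rewrite ?eqxx. Qed.

Lemma eq_mnm_at (c : 'I_n) m1 m2 : m1 = m2 -> m1 c = m2 c.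
Proof. by move->. Qed.

Ltac cauchy_tac := rewrite /cauchy; mnm_simpl; rewrite ?addn0 ?add0n;
  repeat match goal with H : _ = 0%N |- _ => rewrite H end.

Lemma S_leading_spatial b : spatial b -> exists p, S_leading b p.
Proof.
move=> sb; move/andP: (sb) => [/eqP bY /eqP bA].
pose x := (b + U_(Y0) + U_(A0))%MM.
have [p [Np px]] := cauchy_point R x.
exists p; split => //.
  apply: opS_single => [i|]; rewrite px; try by cauchy_tac.
    by case: eqP => // /(eq_mnm_at Y0); mnm_simpl; lia.
  by rewrite (_ : _ + _ + _ = x)%MM ?eqxx ?oner_eq0 //; mnm_lia.
move=> m cm neq_mx le_rank; apply/eqP; apply: contraT => nz; exfalso.
have [b' sb' m_cases] := cauchy_cases cm; clear cm.
move/andP: (sb') => [/eqP bY' /eqP bA'].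
case: m_cases => ->{m} in neq_mx le_rank nz *.
- case/opS_supp: nz => [|[i]]; rewrite px; try by cauchy_tac.
    move/natr_eqb_neq0 => E; move/eqP: neq_mx; apply; apply/mnmP => j.
    by move/(eq_mnm_at j): E; rewrite !mnmDE; lia.
  by move/natr_eqb_neq0/(eq_mnm_at Y0); mnm_simpl; lia.
- case/(opS_supp_Y0 Np): nz => [[i]|[i]]; rewrite px; try by cauchy_tac.
    by move/natr_eqb_neq0/(eq_mnm_at Y0); mnm_simpl; lia.
  by move/natr_eqb_neq0/(eq_mnm_at A0); mnm_simpl; lia.
- case/(opS_supp_A0 Np): nz => [[i]|[i]]; rewrite px; try by cauchy_tac.
    by move/natr_eqb_neq0/(eq_mnm_at A0); mnm_simpl; lia.
  by move/natr_eqb_neq0/(eq_mnm_at Y0); mnm_simpl; lia.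
case/(opS_supp_Y0A0 Np): nz => [[i [j]]|[i]]; rewrite px; try by cauchy_tac.
  by move/natr_eqb_neq0/(eq_mnm_at Y0); mnm_simpl; lia.
move/natr_eqb_neq0/(congr1 mdeg); rewrite !mdegD !mdeg1 => deg_b.
move: le_rank; rewrite rank_spatial // rank_Y0A0 //.
by have := tiebreak_le b; have := tiebreak_le b'; lia.
Qed.

Lemma S_leading_Y0 b : spatial b -> exists p, S_leading (b + U_(Y0))%MM p.
Proof.
move=> sb; move/andP: (sb) => [/eqP bY /eqP bA].
pose x := (b + U_(A0) + U_(Ys j1) + U_(Ys j1))%MM.
have [p [Np px]] := cauchy_point R x.
exists p; split => //.
  apply: (opS_single_Y0 Np (i0 := j1)) => [i|i ni|]; rewrite px; try by cauchy_tac.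
  - by case: eqP => // /(eq_mnm_at Y0); mnm_simpl; lia.
  - by case: eqP => // /(eq_mnm_at (Ys j1)); mnm_simpl; rewrite (negbTE ni); lia.
  - by rewrite eqxx oner_eq0.
move=> m cm neq_mx le_rank; apply/eqP; apply: contraT => nz; exfalso.
have [b' sb' m_cases] := cauchy_cases cm; clear cm.
move/andP: (sb') => [/eqP bY' /eqP bA'].
move: (tiebreak_le b) (tiebreak_le b'); rewrite /tiebreak => tb tb'.
case: m_cases => ->{m} in neq_mx le_rank nz *.
- case/opS_supp: nz => [|[i]]; rewrite px; try by cauchy_tac.
    by move/natr_eqb_neq0/(eq_mnm_at Y0); mnm_simpl; lia.
  by move/natr_eqb_neq0/(eq_mnm_at A0); mnm_simpl; lia.
- case/(opS_supp_Y0 Np): nz => [[i]|[i]]; rewrite px; try by cauchy_tac.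
    move/natr_eqb_neq0 => E; have [ei|ni] := eqVneq i j1.
      move/eqP: neq_mx; apply; apply/mnmP => j; subst i.
      by move/(eq_mnm_at j): E; rewrite !mnmDE; lia.
    move: le_rank; rewrite !rank_Y0 // /tiebreak.
    move/(congr1 mdeg): (E); rewrite !mdegD !mdeg1.
    move/(eq_mnm_at (Ys j1)): (E); move/(eq_mnm_at (As j2)): E.
    by mnm_simpl; rewrite (negbTE ni) /=; lia.
  by move/natr_eqb_neq0/(eq_mnm_at Y0); mnm_simpl; lia.
- case/(opS_supp_A0 Np): nz => [[i]|[i]]; rewrite px; try by cauchy_tac.
    by move/natr_eqb_neq0/(eq_mnm_at Y0); mnm_simpl; lia.
  move/natr_eqb_neq0 => E; move: le_rank; rewrite rank_Y0 // rank_A0 // /tiebreak.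
  move/(congr1 mdeg): (E); rewrite !mdegD !mdeg1.
  move/(eq_mnm_at (Ys j1)): (E); move/(eq_mnm_at (As j2)): E.
  by mnm_simpl; case: (i =P j1) => [->|_] /=; lia.
case/(opS_supp_Y0A0 Np): nz => [[i [j]]|[i]]; rewrite px; try by cauchy_tac.
  by move/natr_eqb_neq0/(eq_mnm_at A0); mnm_simpl; lia.
by move/natr_eqb_neq0/(eq_mnm_at Y0); mnm_simpl; lia.
Qed.

Lemma S_leading_A0 b : spatial b -> exists p, S_leading (b + U_(A0))%MM p.
Proof.
move=> sb; move/andP: (sb) => [/eqP bY /eqP bA].
pose x := (b + U_(Y0) + U_(As j2) + U_(As j2))%MM.
have [p [Np px]] := cauchy_point R x.
exists p; split => //.
  apply: (opS_single_A0 Np (i0 := j2)) => [i|i ni|]; rewrite px; try by cauchy_tac.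
  - by case: eqP => // /(eq_mnm_at A0); mnm_simpl; lia.
  - by case: eqP => // /(eq_mnm_at (As j2)); mnm_simpl; rewrite (negbTE ni) /=; lia.
  - by rewrite eqxx oner_eq0.
move=> m cm neq_mx le_rank; apply/eqP; apply: contraT => nz; exfalso.
have [b' sb' m_cases] := cauchy_cases cm; clear cm.
move/andP: (sb') => [/eqP bY' /eqP bA'].
move: (tiebreak_le b) (tiebreak_le b'); rewrite /tiebreak => tb tb'.
case: m_cases => ->{m} in neq_mx le_rank nz *.
- case/opS_supp: nz => [|[i]]; rewrite px; try by cauchy_tac.
    by move/natr_eqb_neq0/(eq_mnm_at A0); mnm_simpl; lia.
  by move/natr_eqb_neq0/(eq_mnm_at Y0); mnm_simpl; lia.
- case/(opS_supp_Y0 Np): nz => [[i]|[i]]; rewrite px; try by cauchy_tac.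
    by move/natr_eqb_neq0/(eq_mnm_at A0); mnm_simpl; lia.
  move/natr_eqb_neq0 => E; move: le_rank; rewrite rank_A0 // rank_Y0 // /tiebreak.
  move/(congr1 mdeg): (E); rewrite !mdegD !mdeg1.
  move/(eq_mnm_at (Ys j1)): (E); move/(eq_mnm_at (As j2)): E.
  mnm_simpl; case: (i =P j1) => [->|_] /=; first lia.
  by case: (i =P j2) => _ /=; lia.
- case/(opS_supp_A0 Np): nz => [[i]|[i]]; rewrite px; try by cauchy_tac.
    move/natr_eqb_neq0 => E; have [ei|ni] := eqVneq i j2.
      move/eqP: neq_mx; apply; apply/mnmP => j; subst i.
      by move/(eq_mnm_at j): E; rewrite !mnmDE; lia.
    move: le_rank; rewrite !rank_A0 // /tiebreak.
    move/(congr1 mdeg): (E); rewrite !mdegD !mdeg1.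
    move/(eq_mnm_at (Ys j1)): (E); move/(eq_mnm_at (As j2)): E.
    by mnm_simpl; rewrite (negbTE ni) /=; lia.
  by move/natr_eqb_neq0/(eq_mnm_at A0); mnm_simpl; lia.
case/(opS_supp_Y0A0 Np): nz => [[i [j]]|[i]]; rewrite px; try by cauchy_tac.
  by move/natr_eqb_neq0/(eq_mnm_at Y0); mnm_simpl; lia.
by move/natr_eqb_neq0/(eq_mnm_at A0); mnm_simpl; lia.
Qed.

(* Cauchy data equal to [delta_w] on spatial monomials, to [0] on monomials of
   degree one in a single time variable, and to the spatial part of [opS]
   applied to [delta_w] on monomials [z + Y0 + A0]; the last choice makes the
   spatial Cauchy data of [opS p] vanish. *)
Definition spatial_lift w m : R :=
  if spatial m then (m == w)%:R
  else if (m Y0 == 1%N) && (m A0 == 1%N) then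
    let z := (m - U_(A0) - U_(Y0))%MM in
    \sum_i ((z + U_(As i) + U_(Ys i))%MM == w)%:R * dfac z (As i) (Ys i)
  else 0.

Lemma spatial_lift_spatial w z : spatial z -> spatial_lift w z = (z == w)%:R.
Proof. by rewrite /spatial_lift => ->. Qed.

Lemma spatial_lift_Y0A0 w z : spatial z -> spatial_lift w (z + U_(Y0) + U_(A0))%MM =
  \sum_i ((z + U_(As i) + U_(Ys i))%MM == w)%:R * dfac z (As i) (Ys i).
Proof.
case/andP=> /eqP zY /eqP zA; rewrite /spatial_lift /spatial !addmK.
by mnm_simpl; rewrite zY zA.
Qed.

Lemma spatial_lift_odd w m : (m Y0 + m A0 = 1)%N -> spatial_lift w m = 0.
Proof.
by move=> odd_m; rewrite /spatial_lift /spatial !ifF //; apply/negbTE/nandP; lia.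
Qed.

Lemma spatial_lift_extension w : exists p, inN eta p /\
  forall m, cauchy m -> p@_m = spatial_lift w m.
Proof.
apply: (cauchy_extension (K := (mdeg w).+1)) => m le_w.
rewrite /spatial_lift; case: ifP => [_|_]; first by case: eqP le_w => // ->; rewrite ltnn.
case: ifP => // /andP[/eqP mY /eqP mA]; rewrite big1 // => i _.
case: eqP => [wE|_]; last by rewrite mul0r.
have mE : m = (m - U_(A0) - U_(Y0) + U_(Y0) + U_(A0))%MM.
  by rewrite mnm_subUK ?mnm_subUK //; mnm_simpl; lia.
by move: le_w; rewrite mE -wE !mdegUU ltnn.
Qed.

Lemma opS_spatial_lift_spatial w p : (forall m, cauchy m -> p@_m = spatial_lift w m) ->
  forall z, spatial z -> (opS eta p)@_z = 0.
Proof.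
move=> pw z /andP[/eqP zY /eqP zA].
rewrite mcoeff_opS pw; last by cauchy_tac.
rewrite (_ : z + _ + _ = z + U_(Y0) + U_(A0))%MM; last by mnm_lia.
rewrite spatial_lift_Y0A0; last by rewrite /spatial zY zA.
rewrite (_ : dfac z A0 Y0 = 1); last by rewrite /dfac; mnm_simpl; rewrite zY zA.
rewrite mulr1 addrC; apply/eqP; rewrite subr_eq0; apply/eqP/eq_bigr => i _.
rewrite pw ?spatial_lift_spatial //; last by cauchy_tac.
by rewrite /spatial; mnm_simpl; rewrite zY zA.
Qed.

Lemma addm_shiftY0A0 z i : (z + U_(Y0) + U_(A0) + U_(As i) + U_(Ys i)
  = z + U_(As i) + U_(Ys i) + U_(Y0) + U_(A0))%MM.
Proof. by mnm_lia. Qed.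

Section Y0A0Witness.
Variables (b : mon) (p : Pd R d).
Hypotheses (sb : spatial b) (Np : inN eta p).
Hypothesis pw : forall m, cauchy m ->
  p@_m = spatial_lift (b + U_(Ys j1) + U_(Ys j1) + U_(As j2) + U_(As j2))%MM m.

Lemma opS_Y0A0_witness_neq0 : (opS eta p)@_(b + U_(Y0) + U_(A0))%MM != 0.
Proof.
move/andP: sb => [/eqP bY /eqP bA].
apply: (opS_single_Y0A0 Np (i0 := j1) (j0 := j2)) => [i|i j nij|].
- rewrite addm_shiftY0A0 pw; last by cauchy_tac.
  rewrite spatial_lift_Y0A0; last by rewrite /spatial; mnm_simpl; rewrite bY bA.
  rewrite big1 // => i' _; case: eqP => [E|_]; last by rewrite mul0r.
  exfalso; move/(eq_mnm_at (Ys j1)): (E); move/(eq_mnm_at (As j2)): E; mnm_simpl.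
  case: (i =P j1) => [->|_]; case: (i' =P j1) => [->|_];
    case: (i =P j2) => _; case: (i' =P j2) => _ /=; lia.
- rewrite pw ?spatial_lift_spatial; last 2 first.
  + by rewrite /spatial; mnm_simpl; rewrite bY bA.
  + by cauchy_tac.
  case: eqP => // E; exfalso.
  move/(eq_mnm_at (Ys j1)): (E); move/(eq_mnm_at (As j2)): E.
  by mnm_simpl; case/orP: nij => /negbTE -> /=; lia.
- rewrite pw ?spatial_lift_spatial ?eqxx ?oner_eq0 //; last by cauchy_tac.
  by rewrite /spatial; mnm_simpl; rewrite bY bA.
Qed.

Lemma opS_Y0A0_witness_eq0 m : cauchy m -> m != (b + U_(Y0) + U_(A0))%MM ->
  (rank (b + U_(Y0) + U_(A0)) <= rank m)%N -> (opS eta p)@_m = 0.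
Proof.
move=> cm neq_mx le_rank; apply/eqP; apply: contraT => nz; exfalso.
have [b' sb' m_cases] := cauchy_cases cm; clear cm.
move/andP: (sb') => [/eqP bY' /eqP bA'].
move: (tiebreak_le b) (tiebreak_le b'); rewrite /tiebreak => tb tb'.
case: m_cases => ->{m} in neq_mx le_rank nz *.
- by move: nz; rewrite (opS_spatial_lift_spatial pw) ?eqxx.
- case/(opS_supp_Y0 Np): nz => [[i]|[i]]; rewrite pw ?spatial_lift_odd ?eqxx //;
    by [cauchy_tac | mnm_simpl; lia].
- case/(opS_supp_A0 Np): nz => [[i]|[i]]; rewrite pw ?spatial_lift_odd ?eqxx //;
    by [cauchy_tac | mnm_simpl; lia].
move: le_rank; rewrite !rank_Y0A0 // /tiebreak => le_rank.
case/(opS_supp_Y0A0 Np): nz => [[i [j]]|[i]].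
  rewrite pw ?spatial_lift_spatial; last 2 first.
  + by rewrite /spatial; mnm_simpl; rewrite bY' bA'.
  + by cauchy_tac.
  move/natr_eqb_neq0 => E.
  have [[ei ej]|nij] : (i = j1 /\ j = j2) \/ ((i != j1) || (j != j2)).
  + by case: eqP; case: eqP; auto.
  + move/eqP: neq_mx; apply; apply/mnmP => c; subst i j.
    by move/(eq_mnm_at c): E; rewrite !mnmDE; lia.
  move/(congr1 mdeg): (E); rewrite !mdegD !mdeg1.
  move/(eq_mnm_at (Ys j1)): (E); move/(eq_mnm_at (As j2)): E.
  mnm_simpl; case/orP: nij => /negbTE ->.
    by case: (j =P j2) => _ /=; lia.
  by case: (i =P j1) => _ /=; lia.
rewrite addm_shiftY0A0 pw; last by cauchy_tac.
rewrite spatial_lift_Y0A0; last by rewrite /spatial; mnm_simpl; rewrite bY' bA'.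
case/sumr_neq0 => i'; rewrite mulf_eq0 negb_or => /andP[/natr_eqb_neq0 E _].
move/(congr1 mdeg): (E); rewrite !mdegD !mdeg1.
move/(eq_mnm_at (Ys j1)): (E); move/(eq_mnm_at (As j2)): E; mnm_simpl.
case: (i =P j1) => [->|_]; case: (i' =P j1) => [->|_];
  case: (i =P j2) => _; case: (i' =P j2) => _ /=; lia.
Qed.

End Y0A0Witness.

Lemma S_leading_Y0A0 b : spatial b -> exists p, S_leading (b + U_(Y0) + U_(A0))%MM p.
Proof.
move=> sb; pose w := (b + U_(Ys j1) + U_(Ys j1) + U_(As j2) + U_(As j2))%MM.
have [p [Np pw]] := spatial_lift_extension w.
exists p; split=> //; first exact: opS_Y0A0_witness_neq0.
exact: opS_Y0A0_witness_eq0.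
Qed.

Lemma S_leading_cauchy x : cauchy x -> exists p, S_leading x p.
Proof.
case/cauchy_cases => b sb [] ->; [exact: S_leading_spatial | exact: S_leading_Y0 |
                                  exact: S_leading_A0 | exact: S_leading_Y0A0].
Qed.

Definition in_SN q := exists p, inN eta p /\ opS eta p = q.

Lemma in_SND p q : in_SN p -> in_SN q -> in_SN (p + q).
Proof.
case=> [p' [Np <-]] [q' [Nq <-]]; exists (p' + q'); split; first exact: inND.
by rewrite !opSE mdiff2D.
Qed.

Lemma in_SNZ a q : in_SN q -> in_SN (a *: q).
Proof.
case=> [p [Np <-]]; exists (a *: p); split; first exact: inNZ.
by rewrite !opSE mdiff2Z.
Qed.

(* Clears the rank-[r] Cauchy data of [h] listed in [s] one monomial at a time,
   subtracting multiples of [S_leading] witnesses. *)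
Lemma in_SN_rank_step r (s : seq mon) h : inN eta h ->
  (forall h', inN eta h' ->
     (forall m, cauchy m -> (r <= rank m)%N -> h'@_m = 0) -> in_SN h') ->
  (forall m, cauchy m -> (r < rank m)%N -> h@_m = 0) ->
  (forall m, cauchy m -> rank m = r -> m \notin s -> h@_m = 0) -> in_SN h.
Proof.
move=> + lower; elim: s h => [|x s IHs] h Nh gt_r0 notin0.
  apply: lower => // m cm; rewrite leq_eqVlt => /orP[/eqP/esym|]; last exact: gt_r0.
  by move/notin0; apply.
have [/andP[cx /eqP rx]|not_x] := boolP (cauchy x && (rank x == r)); last first.
  apply: IHs => // m cm rm; have [eq_mx|neq_mx] := eqVneq m x.
    by move: not_x; rewrite -eq_mx cm rm eqxx.
  by move=> ms; apply: notin0 => //; rewrite in_cons negb_or neq_mx.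
have [p [Np Sx_neq0 Sm_eq0]] := S_leading_cauchy cx.
pose a := h@_x / (opS eta p)@_x.
have -> : h = (h - a *: opS eta p) + a *: opS eta p by rewrite subrK.
apply: in_SND; last by apply: in_SNZ; exists p.
apply: IHs; first by rewrite -scaleNr; apply: inND => //; apply: inNZ; exact: inN_opS.
  move=> m cm gt_rm; rewrite mcoeffB mcoeffZ Sm_eq0 ?mulr0 ?subr0 ?gt_r0 //.
    by apply: contraTneq gt_rm => ->; rewrite rx ltnn.
  by rewrite rx ltnW.
move=> m cm rm ms; rewrite mcoeffB mcoeffZ.
have [->|neq_mx] := eqVneq m x; first by rewrite divfK // subrr.
by rewrite notin0 ?in_cons ?negb_or ?neq_mx // Sm_eq0 ?mulr0 ?subr0 // rx rm.
Qed.

Lemma in_SN_rank r h : inN eta h ->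
  (forall m, cauchy m -> (r <= rank m)%N -> h@_m = 0) -> in_SN h.
Proof.
elim: r h => [|r IH] h Nh h0.
  have -> : h = 0 by apply: cauchy_eq0 => // m cm; exact: h0.
  by exists 0; split; [exact: inN0 | rewrite opSE mdiff20].
apply: (in_SN_rank_step (s := msupp h) Nh IH) => m cm rm; first exact: h0.
exact: memN_msupp_eq0.
Qed.

Lemma in_SN_inN q : inN eta q -> in_SN q.
Proof.
move=> Nq; apply: (in_SN_rank (r := (2 * msize q)%N)) => // m cm le_rank.
apply: memN_msupp_eq0; apply: contraTN le_rank => /msize_mdeg_lt lt_q.
by rewrite -ltnNge; have := tiebreak_le m; rewrite /rank; case: spatial => /=; lia.
Qed.

End Surjectivity.

Theorem mainTheorem10 (R : realFieldType) (d : nat) (hd : (3 <= d)%N) :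
  let eta := minkowski R d in
  (forall p : Pd R d, inN eta p -> inN eta (opS eta p)) /\
  (forall q : Pd R d, inN eta q -> exists p : Pd R d, inN eta p /\ opS eta p = q).
Proof.
case: d hd => [|[|[|k]]] // _; split; first exact: inN_opS.
exact: in_SN_inN.
Qed.
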